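(* Let $A\subset\mathbf{Z}_{\geq0}$ be finite with $0\in A$, $N=\#A\geq2$, $A(x)=\sum_{a\in A}x^a$, and suppose $A(x)$ has a spectrum $\{\theta_1,\dots,\theta_{N-1}\}$; set $\theta_0=0$ and $\epsilon_{ij}=e^{2\pi i(\theta_i-\theta_j)}$. If the number of distinct roots of $A(x)$ on the unit circle is less than $\frac{3N}{2}-1$, then $G=\{\epsilon_{ij}: 0\leq i,j\leq N-1\}$ is a multiplicative group, and it equals the group of all $N$-th roots of unity.
   Context: A set $\{\theta_1,\dots,\theta_{N-1}\}\subset(0,1)$ is called a spectrum for $A(x)$ if the $\theta_j$ are pairwise distinct and, with $\theta_0=0$, $A(e^{2\pi i(\theta_i-\theta_j)})=0$ for all $0\leq i,j\leq N-1$ with $i\neq j$. *)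

From HB Require Import structures.
From mathcomp Require Import all_boot all_order all_algebra.
From mathcomp Require Import complex.
From mathcomp Require Import reals trigo.
Set Implicit Arguments. Unset Strict Implicit. Unset Printing Implicit Defensive.
Import Order.TTheory GRing.Theory Num.Theory.
Local Open Scope ring_scope.

Definition expi2pi (R : realType) (x : R) : R[i] :=
  Complex (cos (2 * pi * x)) (sin (2 * pi * x)).

(* The polynomial A(x) = sum_{a in A} x^a, for A given as a duplicate-free seq. *)
Definition polyA (R : realType) (A : seq nat) : {poly R[i]} :=
  \sum_(a <- A) 'X^a.

Definition is_spectrum (R : realType) (A : seq nat) (N : nat) (theta : 'I_N -> R) : Prop :=
  (forall i : 'I_N, nat_of_ord i = 0%N -> theta i = 0) /\
  (forall i : 'I_N, nat_of_ord i <> 0%N -> 0 < theta i < 1) /\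
  (forall i j : 'I_N, nat_of_ord i <> 0%N -> nat_of_ord j <> 0%N -> i <> j -> theta i <> theta j) /\
  (forall i j : 'I_N, i <> j -> (polyA R A).[expi2pi (theta i - theta j)] = 0).

Definition is_mul_group (F : fieldType) (G : F -> Prop) : Prop :=
  G 1 /\ (forall x, G x -> x != 0) /\
  (forall x y, G x -> G y -> G (x * y)) /\ (forall x, G x -> G x^-1).

(** The quotients [e_i / e_j] of the points [e_i = e^{2 pi i theta_i}] all lie in
    [{1} u {roots of A on the unit circle}], so fewer than [3N/2] of them are
    distinct.  For fixed [x, y] the two [N]-element families [e_a / e_x] and
    [e_b / e_y] then share more than [N/2] values, i.e. more than half of the
    [b] satisfy [e_x / e_y = e_a / e_b] for some [a]; two such majorities meet,
    which makes the quotient set [Q] closed under products, hence a finite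
    group.  Summing [A] over [Q] gives [A(1) = N] on the one hand and, by
    orthogonality of characters, [|Q|] times the number of [a in A] with
    [Q^a = 1] on the other; as [0 in A] and [|Q| >= N], this forces [|Q| = N],
    and a group of order [N] in a field consists of all [N]-th roots of unity. *)
From HB Require Import structures.
From mathcomp Require Import all_boot all_order all_algebra.
From mathcomp Require Import complex.
From mathcomp Require Import reals trigo.
From mathcomp Require Import zify lra.
Set Implicit Arguments. Unset Strict Implicit. Unset Printing Implicit Defensive.
Import Order.TTheory GRing.Theory Num.Theory.
Local Open Scope ring_scope.

Lemma leq_size_add_count (T : eqType) (s1 s2 h : seq T) : uniq s1 -> uniq s2 ->
  {subset s1 <= h} -> {subset s2 <= h} ->
  (size s1 + size s2 <= size h + count (mem s1) s2)%N.
Proof.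
move=> s1_uniq s2_uniq s1h s2h.
have : (size (s1 ++ filter (predC (mem s1)) s2) <= size h)%N.
  apply: uniq_leq_size.
  - rewrite cat_uniq s1_uniq filter_uniq // andbT.
    by apply/hasPn => x; rewrite mem_filter => /andP[].
  - by move=> x; rewrite mem_cat mem_filter => /orP[/s1h|/andP[_ /s2h]].
rewrite size_cat size_filter -(count_predC (mem s1) s2); lia.
Qed.

Section FiniteMulGroup.
Variables (F : fieldType) (H : seq F).
Hypotheses (H_uniq : uniq H) (H_neq0 : {in H, forall h, h != 0}).
Hypotheses (H_mulr : {in H &, forall x y, x * y \in H})
           (H_invr : {in H, forall x, x^-1 \in H}).

Lemma perm_mull_group g : g \in H -> perm_eq [seq g * h | h <- H] H.
Proof.
move=> Hg; apply: uniq_perm => //.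
  by rewrite map_inj_uniq //; apply/mulfI/H_neq0.
move=> h; apply/mapP/idP => [[k Hk ->]|Hh]; first exact: H_mulr.
exists (g^-1 * h); first by rewrite H_mulr ?H_invr.
by rewrite mulrA divff ?mul1r ?H_neq0.
Qed.

Lemma sum_group_expr a : \sum_(h <- H) h ^+ a =
  if all (fun h => h ^+ a == 1) H then (size H)%:R else 0.
Proof.
case: ifP => [/allP H1 | /negbT/allPn[g Hg g_ne1]].
  by rewrite -sum1_size natr_sum; apply: eq_big_seq => h /H1/eqP.
set S := \sum_(h <- H) h ^+ a.
(* translating by [g] permutes [H], so [S = g^a S] with [g^a != 1] *)
have S_eq : S = g ^+ a * S.
  rewrite {1}/S -(perm_big _ (perm_mull_group Hg)) big_map mulr_sumr.
  by apply: eq_bigr => h _; rewrite exprMn.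
have /eqP : (1 - g ^+ a) * S = 0 by rewrite mulrBl mul1r -S_eq subrr.
by rewrite mulf_eq0 subr_eq0 eq_sym (negbTE g_ne1) => /eqP.
Qed.

Lemma group_expr_size h : h \in H -> h ^+ size H = 1.
Proof.
move=> Hh; set P := \prod_(x <- H) x.
have P_neq0 : P != 0 by rewrite prodf_seq_neq0; apply/allP => x /H_neq0.
apply: (mulIf P_neq0); rewrite mul1r {2}/P -(perm_big _ (perm_mull_group Hh)).
by rewrite big_map big_split /= big_const_seq count_predT iter_mulr_1.
Qed.

End FiniteMulGroup.

Section Quotients.
Variables (F : fieldType) (n : nat) (e : 'I_n -> F).
Hypotheses (e_inj : injective e) (e_neq0 : forall i, e i != 0).

Definition quotients := undup [seq e i / e j | i <- enum 'I_n, j <- enum 'I_n].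

Lemma quotientsP z : reflect (exists i j, z = e i / e j) (z \in quotients).
Proof.
rewrite mem_undup; apply: (iffP allpairsP) => [[[i j] /= [_ _ ->]]|[i [j ->]]].
  by exists i, j.
by exists (i, j); rewrite !mem_enum.
Qed.

Lemma quotients_uniq : uniq quotients. Proof. exact: undup_uniq. Qed.

Lemma quotients_neq0 : {in quotients, forall z, z != 0}.
Proof. by move=> z /quotientsP[i [j ->]]; rewrite mulf_neq0 ?invr_eq0. Qed.

Lemma quotients_invr : {in quotients, forall z, z^-1 \in quotients}.
Proof.
by move=> z /quotientsP[i [j ->]]; apply/quotientsP; exists j, i; rewrite invf_div.
Qed.

Lemma mem1_quotients (i : 'I_n) : 1 \in quotients.
Proof. by apply/quotientsP; exists i, i; rewrite divff. Qed.

Lemma size_quotients_ge (i : 'I_n) : (n <= size quotients)%N.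
Proof.
have := @uniq_leq_size _ [seq e j / e i | j <- enum 'I_n] quotients.
rewrite size_map size_enum_ord; apply=> [|z /mapP[j _ ->]].
  by rewrite map_inj_uniq ?enum_uniq // => j k /(mulIf (invr_neq0 (e_neq0 i)))/e_inj.
by apply/quotientsP; exists j, i.
Qed.

Hypothesis small_quotients : (2 * size quotients < 3 * n)%N.

Definition quotient_reps x y b := [exists a, e a / e b == e x / e y].

Lemma count_quotient_reps x y :
  (n < 2 * count (quotient_reps x y) (enum 'I_n))%N.
Proof.
set S1 := [seq e a / e x | a <- enum 'I_n].
set S2 := [seq e b / e y | b <- enum 'I_n].
have div_inj z : injective (fun a => e a / e z).
  by move=> a b /(mulIf (invr_neq0 (e_neq0 z)))/e_inj.
have S1sub : {subset S1 <= quotients}.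
  by move=> z /mapP[a _ ->]; apply/quotientsP; exists a, x.
have S2sub : {subset S2 <= quotients}.
  by move=> z /mapP[b _ ->]; apply/quotientsP; exists b, y.
have S1_uniq : uniq S1 by rewrite map_inj_uniq ?enum_uniq.
have S2_uniq : uniq S2 by rewrite map_inj_uniq ?enum_uniq.
have := leq_size_add_count S1_uniq S2_uniq S1sub S2sub.
rewrite !size_map -enumT size_enum_ord count_map.
(* [e_a / e_x = e_b / e_y] iff [e_a / e_b = e_x / e_y] *)
have -> : count (preim (fun b => e b / e y) (mem S1)) (enum 'I_n) =
          count (quotient_reps x y) (enum 'I_n).
  apply: eq_count => b /=; apply/mapP/existsP => -[a].
    by move=> _ /eqP; rewrite eqr_div // => /eqP eq_ab; exists a; rewrite eqr_div // -eq_ab mulrC.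
  rewrite eqr_div // => /eqP eq_ab; exists a; rewrite ?mem_enum //.
  by apply/eqP; rewrite eqr_div // eq_ab mulrC.
move: small_quotients; lia.
Qed.

Lemma quotients_mulr : {in quotients &, forall u v, u * v \in quotients}.
Proof.
move=> _ _ /quotientsP[x [y ->]] /quotientsP[x' [y' ->]].
have reps_xy := count_quotient_reps x y; have reps_yx' := count_quotient_reps y' x'.
have : (0 < count (predI (quotient_reps x y) (quotient_reps y' x')) (enum 'I_n))%N.
  have := count_predUI (quotient_reps x y) (quotient_reps y' x') (enum 'I_n).
  have := count_size (predU (quotient_reps x y) (quotient_reps y' x')) (enum 'I_n).
  rewrite size_enum_ord; lia.
rewrite -has_count => /hasP[b _ /andP[/existsP[a /eqP eq_a] /existsP[d /eqP eq_d]]].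
apply/quotientsP; exists a, d.
by rewrite -eq_a -[e x' / e y']invf_div -eq_d invf_div mulrA divfK.
Qed.

End Quotients.

Section SpectralQuotients.
Variables (F : numFieldType) (A : seq nat) (e : 'I_(size A) -> F).
Hypotheses (A0 : 0%N \in A) (e_neq0 : forall i, e i != 0).
Hypothesis quotient_root :
  forall i j, i != j -> \sum_(a <- A) (e i / e j) ^+ a = 0.

Let size_A_gt0 : (0 < size A)%N. Proof. by case: (A) A0. Qed.
Let i0 : 'I_(size A) := Ordinal size_A_gt0.

Let sum_expr1 : \sum_(a <- A) (1 : F) ^+ a = (size A)%:R.
Proof. by rewrite -sum1_size natr_sum; apply: eq_bigr => a _; rewrite expr1n. Qed.

Lemma spectral_inj : injective e.
Proof.
move=> i j eq_ij; apply/eqP; apply: contraT => /quotient_root/eqP.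
by rewrite eq_ij divff // sum_expr1 pnatr_eq0 eqn0Ngt size_A_gt0.
Qed.

Hypothesis small_quotients : (2 * size (quotients e) < 3 * size A)%N.

Let Q := quotients e.
Let Q_uniq : uniq Q := quotients_uniq e.
Let Q_neq0 := quotients_neq0 e_neq0.
Let Q_mulr := quotients_mulr spectral_inj e_neq0 small_quotients.
Let Q_invr := @quotients_invr F _ e.

Let sum_powers_over_quotients : \sum_(h <- Q) \sum_(a <- A) h ^+ a = (size A)%:R.
Proof.
rewrite (bigD1_seq 1) ?(mem1_quotients e_neq0 i0) //=.
rewrite sum_expr1 big1_seq ?addr0 // => h /andP[h_ne1 /quotientsP[i [j eq_h]]].
by rewrite eq_h quotient_root //; apply: contraNneq h_ne1 => eq_ij; rewrite eq_h eq_ij divff.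
Qed.

Lemma size_spectral_quotients : size Q = size A.
Proof.
pose k := count (fun a => all (fun h => h ^+ a == 1) Q) A.
have k_gt0 : (0 < k)%N.
  by rewrite -has_count; apply/hasP; exists 0%N => //; apply/allP => h _.
(* orthogonality of the characters [h |-> h^a] of the group [Q] *)
have : \sum_(h <- Q) \sum_(a <- A) h ^+ a = (size Q)%:R *+ k.
  rewrite exchange_big (eq_bigr _ (fun a _ => sum_group_expr Q_uniq Q_neq0 Q_mulr Q_invr a)).
  by rewrite -big_mkcond big_const_seq iter_addr_0.
rewrite sum_powers_over_quotients -[_ *+ k]mulr_natr -natrM => /eqP; rewrite eqr_nat => /eqP size_eq.
apply/eqP; rewrite eqn_leq size_eq leq_pmulr //=.
by rewrite -size_eq (size_quotients_ge spectral_inj e_neq0 i0).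
Qed.

Lemma mem_spectral_quotients z : (z \in Q) = (z ^+ size A == 1).
Proof.
have Q_unity : all (size A).-unity_root Q.
  apply/allP => h Qh; rewrite unity_rootE -size_spectral_quotients.
  by rewrite (group_expr_size Q_uniq Q_neq0 Q_mulr Q_invr Qh).
rewrite -unity_rootE; symmetry.
exact: (mem_unity_roots size_A_gt0 Q_unity Q_uniq size_spectral_quotients z).
Qed.

End SpectralQuotients.

Lemma expi2piD (R : realType) (x y : R) : expi2pi (x + y) = expi2pi x * expi2pi y.
Proof.
rewrite /expi2pi; simpc; rewrite mulrDr cosD sinD.
by congr Complex; rewrite addrC.
Qed.

Lemma expi2pi0 (R : realType) : expi2pi (0 : R) = 1.
Proof. by rewrite /expi2pi mulr0 cos0 sin0. Qed.

Lemma expi2pi_neq0 (R : realType) (x : R) : expi2pi x != 0.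
Proof.
apply/eqP => ex0; have := expi2piD x (- x).
by rewrite subrr expi2pi0 ex0 mul0r => /eqP; rewrite oner_eq0.
Qed.

Lemma expi2piB (R : realType) (x y : R) : expi2pi (x - y) = expi2pi x / expi2pi y.
Proof.
apply: (mulIf (expi2pi_neq0 y)); rewrite divfK ?expi2pi_neq0 // -expi2piD.
by rewrite subrK.
Qed.

Lemma norm_expi2pi (R : realType) (x : R) : `|expi2pi x| = 1.
Proof. by rewrite normc_def /= cos2Dsin2 sqrtr1. Qed.

Lemma horner_polyA (R : realType) (A : seq nat) (z : R[i]) :
  (polyA R A).[z] = \sum_(a <- A) z ^+ a.
Proof. by rewrite /polyA horner_sum; apply: eq_bigr => a _; rewrite hornerXn. Qed.

Theorem mainTheorem13 (R : realType) (A : seq nat) (N : nat) (theta : 'I_N -> R)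
  (s : seq R[i]) :
  uniq A -> 0%N \in A -> N = size A -> (2 <= N)%N ->
  is_spectrum A theta ->
  (* s is the list of the distinct roots of A(x) on the unit circle *)
  uniq s ->
  (forall z : R[i], z \in s <-> (`|z| = 1 /\ root (polyA R A) z)) ->
  (* their number is < 3N/2 - 1 *)
  (size s)%:R < (3 * N)%:R / 2 - 1 :> R ->
  let G := fun z : R[i] => exists i j : 'I_N, z = expi2pi (theta i - theta j) in
  is_mul_group G /\ (forall z : R[i], G z <-> z ^+ N = 1).
Proof.
move=> _ A0 size_A; subst N; move=> _ [_ [_ [_ spec_root]]] _ s_roots size_s G.
pose e i := expi2pi (theta i).
have e_neq0 i : e i != 0 by apply: expi2pi_neq0.
have quotient_root i j : i != j -> \sum_(a <- A) (e i / e j) ^+ a = 0.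
  by move=> /eqP ij; rewrite -horner_polyA -expi2piB; apply: spec_root.
have GE z : G z <-> z \in quotients e.
  split=> [[i [j ->]]|/quotientsP[i [j ->]]]; last by exists i, j; rewrite expi2piB.
  by apply/quotientsP; exists i, j; rewrite expi2piB.
have small_quotients : (2 * size (quotients e) < 3 * size A)%N.
  have : {subset quotients e <= 1 :: s}.
    move=> _ /quotientsP[i [j ->]]; rewrite inE.
    have [->|ij] := eqVneq i j; first by rewrite divff ?eqxx.
    apply/orP; right; apply/s_roots; split; last by apply/rootP; rewrite horner_polyA quotient_root.
    by rewrite normf_div !norm_expi2pi divr1.
  move=> /(uniq_leq_size (quotients_uniq e)) /= size_le.
  suff : (2 * (size s).+1 < 3 * size A)%N by lia.
  by rewrite -(ltr_nat R) natrM -addn1 natrD; lra.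
have Q_mem := mem_spectral_quotients A0 e_neq0 quotient_root small_quotients.
split; last by move=> z; rewrite GE Q_mem; split=> /eqP.
have Q_mulr := quotients_mulr (spectral_inj A0 e_neq0 quotient_root) e_neq0 small_quotients.
split; first by apply/GE; rewrite Q_mem expr1n.
split; first by move=> x /GE/(quotients_neq0 e_neq0).
split; first by move=> x y /GE Qx /GE Qy; apply/GE/Q_mulr.
by move=> x /GE/quotients_invr Qx; apply/GE/Qx.
Qed.
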